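(* Let $B$ be a board with $c=3$ colors. Then $B$ has no perfect layout if any of the following holds: (a) some sink is two cells away from three sides of the boundary and is adjacent to another sink; (b) some sink is two cells away from two perpendicular (incident) sides of the boundary and is adjacent to the two other sinks; (c) some sink is two cells away from two opposite sides of the boundary and is adjacent to the two other sinks; (d) some sink is two cells away from three sides of the boundary and, in the remaining direction, exactly one blank cell separates it from another sink which is adjacent to the third sink.
   Context: A board is an $m\times n$ grid of unit cells in which exactly $c$ cells are sinks, one of each of $c$ colors, and all other cells are empty. A layout places, in some of the empty cells, arrows, each having one of the $c$ colors and one of the four cardinal directions. A packet of color $i$ may enter the grid through any unit edge of the outer boundary of the grid, into the adjacent cell, moving perpendicular to that edge into the grid; it moves one cell at a time in its current direction, and whenever it enters a cell containing an arrow of color $i$ its direction becomes that arrow's direction (arrows of other colors are ignored). The packet succeeds if it enters the sink of color $i$; it fails if it enters a sink of another color, leaves the grid, or travels forever without reaching a sink. A perfect layout is a layout in which every packet of every color entering through every boundary edge succeeds. A sink is ''two cells away'' from a side of the boundary if, in the straight line from the sink to that side (along its row or column), there are exactly two cells between the sink and that side, both empty. Two sinks are adjacent if their cells share an edge. *)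

From mathcomp Require Import all_boot.
Set Implicit Arguments. Unset Strict Implicit. Unset Printing Implicit Defensive.

(* A cell is (row, column); row 0 is the top row, column 0 the left column.
   The grid of an m x n board consists of the cells (r, k) with r < m, k < n. *)
Definition cell := (nat * nat)%type.

Inductive dir := North | South | East | West.

Definition opp (d : dir) : dir :=
  match d with North => South | South => North | East => West | West => East end.

Definition perpendicular (d1 d2 : dir) : Prop := d1 <> d2 /\ d1 <> opp d2.

Definition in_grid (m n : nat) (x : cell) : bool := (x.1 < m) && (x.2 < n).

Definition raw_move (d : dir) (x : cell) : option cell :=
  match d with
  | North => if x.1 is r.+1 then Some (r, x.2) else None
  | South => Some (x.1.+1, x.2)
  | West  => if x.2 is k.+1 then Some (x.1, k) else None
  | East  => Some (x.1, x.2.+1)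
  end.

Definition nxt (m n : nat) (d : dir) (x : cell) : option cell :=
  match raw_move d x with
  | Some y => if in_grid m n y then Some y else None
  | None => None
  end.

(* A board: m x n grid with c sinks [sink : 'I_c -> cell] (sink j has color j),
   pairwise distinct, inside the grid; all other cells are empty. *)
Definition is_board (m n c : nat) (sink : 'I_c -> cell) : Prop :=
  (forall j, in_grid m n (sink j)) /\ injective sink.

Definition is_sink (c : nat) (sink : 'I_c -> cell) (x : cell) : Prop :=
  exists j, sink j = x.

(* A layout: optional arrow (color, direction) on each cell. *)
Definition layout (c : nat) := cell -> option ('I_c * dir).

Definition valid_layout (m n c : nat) (sink : 'I_c -> cell) (L : layout c) : Prop :=
  forall x a, L x = Some a -> in_grid m n x /\ ~ is_sink sink x.

(* [succeeds i x d]: a packet of color i that has just entered cell x while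
   moving in direction d eventually enters the sink of color i (in finitely
   many steps, without first entering another sink or leaving the grid). *)
Inductive succeeds (m n c : nat) (sink : 'I_c -> cell) (L : layout c) (i : 'I_c)
  : cell -> dir -> Prop :=
| succ_here : forall d, succeeds m n sink L i (sink i) d
| succ_step : forall x d y,
    ~ is_sink sink x ->
    let d' := match L x with
              | Some (j, e) => if j == i then e else d
              | None => d end in
    nxt m n d' x = Some y ->
    succeeds m n sink L i y d' ->
    succeeds m n sink L i x d.

(* A boundary edge is the side of a grid cell x facing direction (opp d) with no
   grid cell beyond it; the packet enters x moving in direction d. *)
Definition perfect_layout (m n c : nat) (sink : 'I_c -> cell) (L : layout c) : Prop :=
  valid_layout m n sink L /\
  forall (i : 'I_c) (x : cell) (d : dir),
    in_grid m n x -> nxt m n (opp d) x = None -> succeeds m n sink L i x d.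

(* Cell x is "two cells away" from the side of the boundary lying in direction d:
   exactly two cells lie between x and that side, both empty. *)
Definition two_away (m n c : nat) (sink : 'I_c -> cell) (x : cell) (d : dir) : Prop :=
  exists y z, nxt m n d x = Some y /\ nxt m n d y = Some z /\ nxt m n d z = None /\
              ~ is_sink sink y /\ ~ is_sink sink z.

Definition adjacent (m n : nat) (x y : cell) : Prop :=
  exists d, nxt m n d x = Some y.

From mathcomp Require Import all_boot zify.
Set Implicit Arguments. Unset Strict Implicit. Unset Printing Implicit Defensive.

(* The heart of the proof is an enclosure argument.  A side l of the sink of
   colour i is sealed if it is open (two empty cells, then the boundary),
   blocked (an adjacent sink) or a gap (one empty cell without an arrow of
   colour i, then another sink).  A packet of another colour entering through
   an open side must be turned away within its two cells; with at least three
   colours these cells therefore hold the arrows of the two other colours and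
   no arrow of colour i (open_arm_clear).  Hence, if all four sides are sealed,
   a packet of colour i reaches its sink only by running straight in along an
   open side from the boundary (only_feeders_reach_sink), so a packet of
   colour i entering beyond a blocked or gap side fails
   (enclosed_sink_unreachable).

   Cases
   (a)-(c) exhibit an enclosed sink directly.  In case (d) the sink s is
   enclosed unless the cell y carries an arrow of colour s; then either the
   sink t is enclosed (u lies beyond t), or u lies beside t and only one empty
   cell separates u from the boundary, which would have to carry the arrows
   of both other colours (no_isolated_edge_cell). *)

Lemma opp_involutive d : opp (opp d) = d. Proof. by case: d. Qed.

Lemma opp_inj d e : opp d = opp e -> d = e. Proof. by case: d; case: e. Qed.

Lemma dir_eq_dec (d e : dir) : {d = e} + {d <> e}.
Proof. decide equality. Qed.

Lemma dir_trichotomy e D : e = D \/ e = opp D \/ perpendicular e D.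
Proof.
by case: e; case: D; do ?[by left | by right; left | by right; right; split].
Qed.

Lemma four_directions (a b c d l : dir) :
  a <> b -> a <> c -> a <> d -> b <> c -> b <> d -> c <> d ->
  l = a \/ l = b \/ l = c \/ l = d.
Proof.
case: a; case: b; case: c; case: d; case: l => ab ac ad bc bd cd;
  do ?[by left | by right; left | by right; right; left | by right; right; right];
  exfalso; by [apply: ab | apply: ac | apply: ad | apply: bc | apply: bd | apply: cd].
Qed.

Definition step (d : dir) (x y : cell) : Prop :=
  match d with
  | North => x.1 = y.1.+1 /\ x.2 = y.2
  | South => y.1 = x.1.+1 /\ y.2 = x.2
  | West  => x.2 = y.2.+1 /\ x.1 = y.1
  | East  => y.2 = x.2.+1 /\ y.1 = x.1
  end.

Definition at_edge (m n : nat) (d : dir) (x : cell) : Prop :=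
  match d with
  | North => x.1 = 0
  | South => m <= x.1.+1
  | West  => x.2 = 0
  | East  => n <= x.2.+1
  end.

Lemma nxt_someE m n d (x y : cell) :
  nxt m n d x = Some y <-> in_grid m n y /\ step d x y.
Proof.
case: x y => [a b] [c e]; rewrite /nxt /in_grid.
case: d => /=; [case: a => [|a] | | | case: b => [|b]] => /=;
  try by split=> // -[_ []].
all: case: ifP => /andP h; split => [|[/andP hg hs]];
  first [by case=> <- <-; split; [apply/andP|]; lia
        | by congr (Some (_, _)); lia
        | by move=> // | exfalso; lia].
Qed.

Lemma nxt_noneE m n d (x : cell) : in_grid m n x ->
  nxt m n d x = None <-> at_edge m n d x.
Proof.
case: x => a b /andP [/= ha hb]; rewrite /nxt /in_grid.
case: d => /=; [case: a ha => [|a] ha | | | case: b hb => [|b] hb] => //=;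
  by case: ifP => /andP; split => //; lia.
Qed.

Lemma nxt_in m n d x y : nxt m n d x = Some y -> in_grid m n y.
Proof. by case/nxt_someE. Qed.

Lemma nxt_back m n d x y : in_grid m n x -> nxt m n d x = Some y ->
  nxt m n (opp d) y = Some x.
Proof.
move=> gx /nxt_someE [_ sxy]; apply/nxt_someE; split => //.
by case: x y sxy {gx} => [a b] [c e]; case: d => /=; lia.
Qed.

Lemma edge_cell_exists m n d (p : cell) : in_grid m n p ->
  exists w, in_grid m n w /\ nxt m n d w = None.
Proof.
case: p => a b /andP [/= ha hb].
have [w gw ew] : exists2 w, in_grid m n w & at_edge m n d w.
  case: d; [exists (0, b) | exists (m.-1, b) | exists (a, n.-1) | exists (a, 0)];
    rewrite /in_grid /=; by [apply/andP; lia | lia].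
by exists w; split; last exact/nxt_noneE.
Qed.

Definition shift (d : dir) (x : cell) : cell :=
  match d with
  | North => (x.1.-1, x.2)
  | South => (x.1.+1, x.2)
  | West  => (x.1, x.2.-1)
  | East  => (x.1, x.2.+1)
  end.

Ltac solve_coords :=
  repeat match goal with
  | |- nxt _ _ _ _ = Some _ => apply/nxt_someE
  | |- nxt _ _ _ _ = None => apply/nxt_noneE
  | |- _ /\ _ => split
  | |- and3 _ _ _ => split
  | |- and5 _ _ _ _ _ => split
  | |- is_true (_ && _) => apply/andP
  | |- _ <> _ => case
  end; rewrite /in_grid /=; lia.

Lemma perp_two_away_shift m n D l (s y t u y1 z1 : cell) : perpendicular l D ->
  nxt m n D s = Some y -> nxt m n D y = Some t -> nxt m n D t = Some u ->
  nxt m n l s = Some y1 -> nxt m n l y1 = Some z1 -> nxt m n l z1 = None ->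
  exists a b, [/\ nxt m n l t = Some a, nxt m n l a = Some b, nxt m n l b = None,
    [/\ a <> s, a <> t & a <> u] & [/\ b <> s, b <> t & b <> u]].
Proof.
move=> [lD lD'] h1 h2 h3 h4 h5 /(nxt_noneE _ (nxt_in h5)) h6.
move: h1 h2 h3 h4 h5 => /nxt_someE[/andP g1 h1] /nxt_someE[/andP g2 h2]
  /nxt_someE[/andP g3 h3] /nxt_someE[/andP g4 h4] /nxt_someE[/andP g5 h5].
exists (shift l t), (shift l (shift l t)).
move: s y t u y1 z1 h1 h2 h3 h4 h5 h6 g1 g2 g3 g4 g5
  => [s1 s2] [a1 a2] [t1 t2] [u1 u2] [b1 b2] [c1 c2] /=.
by case: D lD lD'; case: l => //= _ _ *; solve_coords.
Qed.

Lemma perp_neighbour_shift m n D e (s y t u y1 z1 : cell) : perpendicular e D ->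
  nxt m n D s = Some y -> nxt m n D y = Some t -> nxt m n e t = Some u ->
  nxt m n e s = Some y1 -> nxt m n e y1 = Some z1 -> nxt m n e z1 = None ->
  exists w, [/\ nxt m n e u = Some w, nxt m n e w = None & [/\ w <> s, w <> t & w <> u]].
Proof.
move=> [eD eD'] h1 h2 h3 h4 h5 /(nxt_noneE _ (nxt_in h5)) h6.
move: h1 h2 h3 h4 h5 => /nxt_someE[/andP g1 h1] /nxt_someE[/andP g2 h2]
  /nxt_someE[/andP g3 h3] /nxt_someE[/andP g4 h4] /nxt_someE[/andP g5 h5].
exists (shift e u).
move: s y t u y1 z1 h1 h2 h3 h4 h5 h6 g1 g2 g3 g4 g5
  => [s1 s2] [a1 a2] [t1 t2] [u1 u2] [b1 b2] [c1 c2] /=.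
by case: D eD eD'; case: e => //= _ _ *; solve_coords.
Qed.

Lemma two_away_next_empty m n c (sink : 'I_c -> cell) x l w :
  two_away m n sink x l -> nxt m n l x = Some w -> ~ is_sink sink w.
Proof. by move=> [y [z [hy [_ [_ [nsy _]]]]]]; rewrite hy => -[<-]. Qed.

Section PerfectLayouts.
Variables (m n c : nat) (sink : 'I_c -> cell) (L : layout c).

Definition turn (i : 'I_c) (x : cell) (d : dir) : dir :=
  if L x is Some (j, e) then if j == i then e else d else d.

Definition carries (i : 'I_c) (x : cell) : bool :=
  if L x is Some (j, _) then j == i else false.

Lemma turn_plain i x d : ~~ carries i x -> turn i x d = d.
Proof. by rewrite /turn /carries; case: (L x) => [[j e]|] //= /negbTE ->. Qed.

Lemma carries_unique i j x : carries i x -> carries j x -> i = j.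
Proof. by rewrite /carries; case: (L x) => [[k e]|] // /eqP <- /eqP. Qed.

Lemma succeeds_inv i x d : succeeds m n sink L i x d ->
  x = sink i \/ (~ is_sink sink x /\ exists y,
    nxt m n (turn i x d) x = Some y /\ succeeds m n sink L i y (turn i x d)).
Proof. by case=> [|{}x {}d y nsx hy sy]; [left | right; split => //; exists y]. Qed.

Hypothesis sink_inj : injective sink.

Lemma succeeds_at_sink i j d : succeeds m n sink L i (sink j) d -> i = j.
Proof. by case/succeeds_inv => [/sink_inj -> | [[]]] //; exists j. Qed.

Lemma pass_through i x d : succeeds m n sink L i x d -> ~ is_sink sink x ->
  ~~ carries i x -> exists y, nxt m n d x = Some y /\ succeeds m n sink L i y d.
Proof.
case/succeeds_inv => [-> []| [_ [y hy]] _ nc]; first by exists i.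
by exists y; rewrite -(turn_plain d nc).
Qed.

Hypothesis sink_grid : forall j, in_grid m n (sink j).
Hypothesis L_perfect : perfect_layout m n sink L.

Lemma entering_packet_succeeds i x d : in_grid m n x -> nxt m n d x = None ->
  succeeds m n sink L i x (opp d).
Proof. by move=> gx ex; apply: L_perfect.2 => //; rewrite opp_involutive. Qed.

(* An empty cell between the sink k and the boundary carries an arrow of
   every other colour i, which would otherwise enter the sink k. *)
Lemma edge_neighbour_guarded k i w e : i <> k ->
  nxt m n e (sink k) = Some w -> nxt m n e w = None -> ~ is_sink sink w ->
  carries i w.
Proof.
move=> ik hw ew nsw; apply/negPn/negP => ncw.
have := entering_packet_succeeds i (nxt_in hw) ew.
case/pass_through => // y []; rewrite (nxt_back (sink_grid k) hw) => -[<-].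
by move/succeeds_at_sink.
Qed.

Lemma corridor_guarded k i y z e : i <> k ->
  nxt m n e (sink k) = Some y -> nxt m n e y = Some z -> nxt m n e z = None ->
  ~ is_sink sink y -> ~ is_sink sink z -> carries i y || carries i z.
Proof.
move=> ik hy hz ez nsy nsz; apply/negPn/negP => /norP [ncy ncz].
have := entering_packet_succeeds i (nxt_in hz) ez.
case/pass_through => // y' []; rewrite (nxt_back (nxt_in hy) hz) => -[<-].
case/pass_through => // s' []; rewrite (nxt_back (sink_grid k) hy) => -[<-].
by move/succeeds_at_sink.
Qed.

Hypothesis three_colours : 2 < c.

Lemma two_other_colours (k : 'I_c) :
  exists i j : 'I_c, [/\ i <> k, j <> k & i <> j].
Proof.
have [c0 c1 c2] : [/\ 0 < c, 1 < c & 2 < c] by split; lia.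
have ne (a b : 'I_c) : val a <> val b -> a <> b by move=> h /(congr1 val).
case: k => k hk; have [k0 | k0] := eqVneq k 0.
  by exists (Ordinal c1), (Ordinal c2); split; apply: ne => /=; lia.
have [k1 | k1] := eqVneq k 1.
  by exists (Ordinal c0), (Ordinal c2); split; apply: ne => /=; lia.
by exists (Ordinal c0), (Ordinal c1); split; apply: ne => /=; lia.
Qed.

(* No sink is separated from the boundary by exactly one empty cell: that
   cell would have to carry the arrows of two different colours. *)
Lemma no_isolated_edge_cell k w e :
  nxt m n e (sink k) = Some w -> nxt m n e w = None -> ~ is_sink sink w -> False.
Proof.
move=> hw ew nsw; have [i [j [ik jk ij]]] := two_other_colours k.
exact: ij (carries_unique (edge_neighbour_guarded ik hw ew nsw)
                         (edge_neighbour_guarded jk hw ew nsw)).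
Qed.

Definition open_arm (i : 'I_c) (l : dir) (y z : cell) : Prop :=
  [/\ nxt m n l (sink i) = Some y, nxt m n l y = Some z, nxt m n l z = None,
      ~ is_sink sink y & ~ is_sink sink z].

Lemma two_awayP i l :
  two_away m n sink (sink i) l <-> exists y z, open_arm i l y z.
Proof.
split=> [[y [z [? [? [? [? ?]]]]]] | [y [z [? ? ? ? ?]]]]; exists y, z; first by split.
by do !split.
Qed.

(* The cells of an open side hold the arrows of the two other colours, hence
   no arrow of the sink's own colour. *)
Lemma open_arm_clear i l y z : open_arm i l y z -> ~~ carries i y /\ ~~ carries i z.
Proof.
case=> hy hz ez nsy nsz; have [j [k [ji ki jk]]] := two_other_colours i.
have /orP gj := corridor_guarded ji hy hz ez nsy nsz.
have /orP gk := corridor_guarded ki hy hz ez nsy nsz.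
split; apply/negP => ci; case: gj => cj; case: gk => ck;
  first [ exact: ji (carries_unique cj ci) | exact: ki (carries_unique ck ci)
        | exact: jk (carries_unique cj ck) ].
Qed.

Definition blocked (i : 'I_c) (l : dir) : Prop :=
  exists j, nxt m n l (sink i) = Some (sink j).

Definition gap_arm (i : 'I_c) (l : dir) (y : cell) : Prop :=
  [/\ nxt m n l (sink i) = Some y, ~ is_sink sink y,
      (exists j, nxt m n l y = Some (sink j)) & ~~ carries i y].

(* Every route into a sealed side runs straight along it (see below). *)
Definition sealed (i : 'I_c) (l : dir) : Prop :=
  (exists y z, open_arm i l y z) \/ blocked i l \/ exists y, gap_arm i l y.

Lemma open_arm_exclusive i l y z : open_arm i l y z ->
  blocked i l \/ (exists y', gap_arm i l y') -> False.
Proof.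
case=> hy hz _ nsy nsz [[j hj] | [y' [hy' _ [j hj] _]]].
  by case: nsy; exists j; rewrite hy in hj; case: hj.
rewrite hy in hy'; case: hy' => ?; subst y'.
by case: nsz; exists j; rewrite hz in hj; case: hj.
Qed.

Definition feeder (i : 'I_c) (x : cell) (d : dir) : Prop :=
  exists2 l, d = opp l &
    (exists y z, open_arm i l y z /\ (x = y \/ x = z)) \/ gap_arm i l x.

Section Enclosure.
Variable i : 'I_c.
Hypothesis enclosed : forall l, sealed i l.

Lemma feeder_entering_sink x d : in_grid m n x -> ~ is_sink sink x ->
  nxt m n (turn i x d) x = Some (sink i) -> feeder i x d.
Proof.
move=> gx nsx hx; set l := opp (turn i x d).
have hl : nxt m n l (sink i) = Some x by exact: nxt_back hx.
have dl : ~~ carries i x -> d = opp l.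
  by rewrite /l opp_involutive => /(turn_plain d) ->.
case: (enclosed l) => [[y [z arm]] | [[j hj] | [y gap]]].
- have [hy _ _ _ _] := arm; rewrite hl in hy; case: hy => ?; subst y.
  exists l; first by apply: dl; case: (open_arm_clear arm).
  by left; exists x, z; split; [|left].
- by case: nsx; exists j; rewrite hl in hj; case: hj.
- have [hy _ _ ncy] := gap; rewrite hl in hy; case: hy => ?; subst y.
  by exists l; [exact: dl | right].
Qed.

(* Only a feeder leads to a feeder: going backwards along a sealed side ends
   at the boundary (open side) or at a sink (gap side). *)
Lemma feeder_step x d y : in_grid m n x -> ~ is_sink sink x ->
  nxt m n (turn i x d) x = Some y -> feeder i y (turn i x d) -> feeder i x d.
Proof.
move=> gx nsx hy [l el F]; have back := nxt_back gx hy.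
rewrite el opp_involutive in back.
case: F => [[y0 [z [arm ey]]] | [_ _ [j hj] _]].
- have [_ hz ez _ _] := arm; case: ey => ?; subst y; last by rewrite back in ez.
  rewrite back in hz; case: hz => ?; subst z.
  have [_ ncx] := open_arm_clear arm.
  by exists l; [rewrite -el turn_plain | left; exists y0, x; split; [|right]].
- by case: nsx; exists j; rewrite back in hj; case: hj.
Qed.

Lemma only_feeders_reach_sink x d : succeeds m n sink L i x d -> in_grid m n x ->
  x = sink i \/ feeder i x d.
Proof.
elim=> [d0 | {}x {}d y nsx d' hy _ IH] gx; [by left | right].
case: (IH (nxt_in hy)) => [ys | fy]; last exact: feeder_step fy.
by subst y; apply: feeder_entering_sink.
Qed.

Theorem enclosed_sink_unreachable l0 :
  blocked i l0 \/ (exists y, gap_arm i l0 y) -> False.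
Proof.
move=> hl0; have [w [gw ew]] := edge_cell_exists l0 (sink_grid i).
have [wi | [l /opp_inj el F]] :=
  only_feeders_reach_sink (entering_packet_succeeds i gw ew) gw; subst.
- by case: hl0 => [[j hj] | [y [hy _ _ _]]]; rewrite ?hj ?hy in ew.
- case: F => [[y [z [arm [? | ?]]]] | [_ _ [j hj] _]]; subst.
  + by case: arm => _ hz; rewrite hz in ew.
  + exact: open_arm_exclusive arm hl0.
  + by rewrite hj in ew.
Qed.

End Enclosure.

Lemma three_open_sides s D :
  (forall d, d <> D -> two_away m n sink (sink s) d) ->
  blocked s D \/ (exists y, gap_arm s D y) -> False.
Proof.
move=> open hD; apply: (enclosed_sink_unreachable (i := s) _ hD) => l.
by case: (dir_eq_dec l D) => [-> | lD]; [right | left; apply/two_awayP; exact: open].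
Qed.

(* Case (a): a sink two cells away from three sides and adjacent to
   another sink is enclosed, the neighbour lying on the fourth side. *)
Lemma three_open_sides_neighbour s D t :
  (forall d, d <> D -> two_away m n sink (sink s) d) ->
  adjacent m n (sink s) (sink t) -> False.
Proof.
move=> open [e he]; have eD : e = D.
  by case: (dir_eq_dec e D) => // eD; case: (two_away_next_empty (open e eD) he); exists t.
by subst e; apply: (three_open_sides open); left; exists t.
Qed.

(* Cases (b) and (c): a sink two cells away from two sides and adjacent to
   all other sinks is enclosed, since two of those neighbours already fill
   the remaining two sides. *)
Lemma two_open_sides_surrounded s d1 d2 : d1 <> d2 ->
  two_away m n sink (sink s) d1 -> two_away m n sink (sink s) d2 ->
  (forall t, t <> s -> adjacent m n (sink s) (sink t)) -> False.
Proof.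
move=> d12 o1 o2 adj; have [j [k [js ks jk]]] := two_other_colours s.
have [[e1 h1] [e2 h2]] := (adj j js, adj k ks).
have far d x : two_away m n sink (sink s) d -> nxt m n d (sink s) <> Some (sink x).
  by move=> o h; apply: (two_away_next_empty o h); exists x.
have a1 : d1 <> e1 by move=> E; subst; exact: far o1 h1.
have a2 : d1 <> e2 by move=> E; subst; exact: far o1 h2.
have a3 : d2 <> e1 by move=> E; subst; exact: far o2 h1.
have a4 : d2 <> e2 by move=> E; subst; exact: far o2 h2.
have a5 : e1 <> e2 by move=> E; subst; rewrite h1 in h2; case: h2 => /sink_inj.
apply: (enclosed_sink_unreachable (i := s) _ (or_introl (ex_intro _ j h1))) => l.
case: (four_directions l d12 a1 a2 a3 a4 a5) => [->|[->|[->|->]]].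
- by left; apply/two_awayP.
- by left; apply/two_awayP.
- by right; left; exists j.
- by right; left; exists k.
Qed.

(* If a sink is two cells away from three sides and separated from another
   sink on its fourth side by one empty cell y, then y carries an arrow of the
   sink's colour (otherwise that side would be a gap). *)
Lemma gap_cell_carries s D y j :
  (forall d, d <> D -> two_away m n sink (sink s) d) ->
  nxt m n D (sink s) = Some y -> ~ is_sink sink y ->
  nxt m n D y = Some (sink j) -> carries s y.
Proof.
move=> open hy nsy hj; apply/negPn/negP => ncy.
by apply: (three_open_sides open); right; exists y; split => //; exists j.
Qed.

End PerfectLayouts.

Lemma three_colours_exhaust (s t u j : 'I_3) : t <> s -> u <> s -> u <> t ->
  j = s \/ j = t \/ j = u.
Proof.
have ne (a b : 'I_3) : a <> b -> nat_of_ord a <> nat_of_ord b by move=> h /val_inj.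
move=> /ne ts /ne us /ne ut; have := ltn_ord j.
have [/val_inj | js] := eqVneq (nat_of_ord j) (nat_of_ord s); first by left.
have [/val_inj | jt] := eqVneq (nat_of_ord j) (nat_of_ord t); first by right; left.
have [/val_inj | ju] := eqVneq (nat_of_ord j) (nat_of_ord u); first by right; right.
by have := ltn_ord s; have := ltn_ord t; have := ltn_ord u; lia.
Qed.

Section ThreeColours.
Variables (m n : nat) (sink : 'I_3 -> cell) (L : layout 3).
Hypothesis sink_inj : injective sink.
Hypothesis sink_grid : forall j, in_grid m n (sink j).
Hypothesis L_perfect : perfect_layout m n sink L.

Variables (s t u : 'I_3) (D : dir) (y : cell).
Hypotheses (ts : t <> s) (us : u <> s) (ut : u <> t).
Hypothesis open : forall d, d <> D -> two_away m n sink (sink s) d.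
Hypotheses (hy : nxt m n D (sink s) = Some y) (nsy : ~ is_sink sink y).
Hypothesis hyt : nxt m n D y = Some (sink t).

Lemma empty_off_sinks x :
  x <> sink s -> x <> sink t -> x <> sink u -> ~ is_sink sink x.
Proof.
by move=> xs xt xu [j]; case: (three_colours_exhaust j ts us ut) => [|[|]] -> /esym.
Qed.

(* If u lies beyond t in direction D, sink t is enclosed: side D is blocked
   by u, side opp D is a gap (y carries an arrow of colour s), and the
   perpendicular sides are open like those of s. *)
Lemma chain_straight : nxt m n D (sink t) = Some (sink u) -> False.
Proof.
move=> htu; have cy := gap_cell_carries sink_inj sink_grid L_perfect isT open hy nsy hyt.
apply: (enclosed_sink_unreachable sink_inj sink_grid L_perfect isT (i := t) _
          (or_introl (ex_intro _ u htu))) => l.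
case: (dir_trichotomy l D) => [-> | [-> | lD]].
- by right; left; exists u.
- right; right; exists y; split => //.
  + exact: nxt_back (nxt_in hy) hyt.
  + by exists s; exact: nxt_back (sink_grid s) hy.
  + by apply/negP => ct; exact: ts (carries_unique ct cy).
- have [y1 [z1 [h1 [h2 [h3 _]]]]] := open lD.1.
  have [a [b [ha hb eb [as' at' au] [bs bt bu]]]] :=
    perp_two_away_shift lD hy hyt htu h1 h2 h3.
  by left; exists a, b; split => //; exact: empty_off_sinks.
Qed.

(* If u lies beside t, perpendicular to D, then u is separated from the
   boundary by a single empty cell. *)
Lemma chain_sideways e : perpendicular e D -> nxt m n e (sink t) = Some (sink u) -> False.
Proof.
move=> eD htu; have [y1 [z1 [h1 [h2 [h3 _]]]]] := open eD.1.
have [w [hw ew [ws wt wu]]] := perp_neighbour_shift eD hy hyt htu h1 h2 h3.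
apply: (no_isolated_edge_cell sink_inj sink_grid L_perfect isT hw ew).
exact: empty_off_sinks.
Qed.

Lemma chain_no_perfect_layout : adjacent m n (sink t) (sink u) -> False.
Proof.
case=> e htu; case: (dir_trichotomy e D) => [eD | [eD | eD]]; subst.
- exact: chain_straight.
- by case: nsy; exists u; move: htu; rewrite (nxt_back (nxt_in hy) hyt) => -[].
- exact: chain_sideways eD htu.
Qed.

End ThreeColours.

Theorem mainTheorem10 (m n : nat) (sink : 'I_3 -> cell) :
  is_board m n sink ->
  (* (a) *)
  ((exists (s : 'I_3) (D : dir),
      (forall d, d <> D -> two_away m n sink (sink s) d) /\
      exists t : 'I_3, t <> s /\ adjacent m n (sink s) (sink t))
   \/
   (* (b) *)
   (exists (s : 'I_3) (d1 d2 : dir), perpendicular d1 d2 /\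
      two_away m n sink (sink s) d1 /\ two_away m n sink (sink s) d2 /\
      forall t : 'I_3, t <> s -> adjacent m n (sink s) (sink t))
   \/
   (* (c) *)
   (exists (s : 'I_3) (d : dir),
      two_away m n sink (sink s) d /\ two_away m n sink (sink s) (opp d) /\
      forall t : 'I_3, t <> s -> adjacent m n (sink s) (sink t))
   \/
   (* (d) *)
   (exists (s : 'I_3) (D : dir),
      (forall d, d <> D -> two_away m n sink (sink s) d) /\
      exists (t u : 'I_3) (y : cell),
        t <> s /\ u <> s /\ u <> t /\
        nxt m n D (sink s) = Some y /\ ~ is_sink sink y /\
        nxt m n D y = Some (sink t) /\
        adjacent m n (sink t) (sink u))) ->
  ~ exists L : layout 3, perfect_layout m n sink L.
Proof.
move=> [grid inj] cases [L perf]; have three : 2 < 3 by [].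
case: cases => [[s [D [open [t [_ adj]]]]] | [B | [C | Dd]]].
- exact: (three_open_sides_neighbour inj grid perf three open adj).
- case: B => s [d1 [d2 [[d12 _] [o1 [o2 adj]]]]].
  exact: (two_open_sides_surrounded inj grid perf three d12 o1 o2 adj).
- case: C => s [d [o1 [o2 adj]]]; have dd : d <> opp d by case: d {o1 o2 adj}.
  exact: (two_open_sides_surrounded inj grid perf three dd o1 o2 adj).
- case: Dd => s [D [open [t [u [y [ts [us [ut [hy [nsy [hyt adj]]]]]]]]]]].
  exact: (chain_no_perfect_layout inj grid perf ts us ut open hy nsy hyt adj).
Qed.
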